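(* Assume Assumptions 1 and 2 (stated in the context). If, during an iteration of Algorithm 1 (the feasible interior point method described in the context), the line search returns a positive step size $\alpha$ and $\theta$ is updated to $\theta+d\alpha$, then the updated $\theta$ is a feasible solution of the semi-infinite program, i.e. $\text{dist}(b_i(t,\theta),o)\ge d_0$ for all bodies $i$ and all $t\in[0,T]$.
   Context: Problem. An articulated robot consists of finitely many rigid bodies. For a finite-dimensional trajectory parameter vector $\theta$ and a time $t\in[0,T]$ ($T>0$), the $i$-th body occupies a set $b_i(t,\theta)\subset\mathbb{R}^3$; static obstacles occupy $o\subset\mathbb{R}^3$. $\text{dist}(A,B)$ denotes the shortest Euclidean distance between sets $A,B$. Given a safe distance $d_0\ge 0$ and a twice differentiable cost $\mathcal{O}(\theta)$, the semi-infinite program (SIP) is: minimize $\mathcal{O}(\theta)$ subject to $\text{dist}(b_i(t,\theta),o)\ge d_0$ for all $i$ and all $t\in[0,T]$. A $\theta$ satisfying all constraints is feasible. Assumption 1: there are finite decompositions $b_i(t,\theta)=\bigcup_j b_{ij}(t,\theta)$ and $o=\bigcup_k o_k$ such that for each triple $(i,j,k)$ the function $(t,\theta)\mapsto \text{dist}(b_{ij}(t,\theta),o_k)$ is sufficiently smooth. Assumption 2: the feasible domain of $t$ and $\theta$ is bounded. Under these, there is a constant $L_1$ with $|\text{dist}(b_{ij}(t_1,\theta),o_k)-\text{dist}(b_{ij}(t_2,\theta),o_k)|\le L_1|t_1-t_2|$ for all $i,j,k,t_1,t_2,\theta$; the algorithm uses such an $L_1$. Barrier: $\mathcal{P}$ is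 a sufficiently smooth, monotonically decreasing function on $(0,\infty)$ with $\lim_{x\to0}\mathcal{P}(x)=\infty$, $\lim_{x\to\infty}\mathcal{P}(x)=0$. Set $\mathcal{P}_{ijk}(t,\theta)=\mathcal{P}(\text{dist}(b_{ij}(t,\theta),o_k)-d_0)$. Partitions: for each triple $(i,j,k)$ the algorithm maintains a finite partition of $[0,T]$ into closed intervals $[T_0^l,T_1^l]$ indexed by $l$; ''subdividing'' the term $(i,j,k,l)$ replaces $[T_0^l,T_1^l]$ in the partition of $(i,j,k)$ by $[T_0^l,(T_0^l+T_1^l)/2]$ and $[(T_0^l+T_1^l)/2,T_1^l]$. Define $\mathcal{P}_{ijkl}(\theta)=\mathcal{P}_{ijk}((T_0^l+T_1^l)/2,\theta)$ and, for $\mu>0$, $\mathcal{E}(\theta)=\mathcal{O}(\theta)+\mu\sum_{ijkl}(T_1^l-T_0^l)\mathcal{P}_{ijkl}(\theta)$ (sum over all triples and all intervals of their partitions). Search directions: $d^{(1)}=-\nabla_\theta\mathcal{E}$, or $d^{(2)}=\mathcal{M}(\nabla^2_\theta\mathcal{E})^{-1}d^{(1)}$ where $\mathcal{M}$ satisfies $\underline\beta I\preceq\mathcal{M}(H)\preceq\bar\beta I$ for fixed positive constants $\underline\beta,\bar\beta$. Wolfe condition: $\mathcal{E}(\theta+d\alpha)\le\mathcal{E}(\theta)+c\langle d\alpha,\nabla_\theta\mathcal{E}(\theta)\rangle$ with fixed $c\in(0,1)$. Safety check (Algorithm 2) at $\theta$: with $\psi(x)=L_1x/2+L_2x^\eta$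 ($L_2,\eta>0$ constants), return some tuple $(i,j,k,l)$ with $\text{dist}(b_{ij}((T_0^l+T_1^l)/2,\theta),o_k)\le d_0+\psi(T_1^l-T_0^l)$ if one exists, else return None (''$\theta$ passes the safety check''). Line-Search($\theta,d,\epsilon_\alpha$) (Algorithm 3), with constants $\alpha_0>0,\gamma\in(0,1)$: set $\alpha=\alpha_0$, $\theta'=\theta+d\alpha$; while $\theta'$ fails the safety check or violates the Wolfe condition: if the safety check returned a tuple $(i,j,k,l)$, then if $\alpha\le\epsilon_\alpha$ set $\epsilon_\alpha\leftarrow\gamma\epsilon_\alpha$, subdivide $(i,j,k,l)$, re-evaluate $\mathcal{E}$ and recompute $d$ (as $d^{(1)}$ or $d^{(2)}$), otherwise set $\alpha\leftarrow\gamma\alpha$; if only the Wolfe condition fails set $\alpha\leftarrow\gamma\alpha$; then update $\theta'=\theta+d\alpha$ and re-run the safety check. Return $\alpha,\epsilon_\alpha$. Algorithm 1: input a feasible $\theta$, initial $\mu$, $\epsilon_\alpha,\epsilon_d,\epsilon_\mu>0$, $\gamma\in(0,1)$. While $\mu>\epsilon_\mu$: compute $d$; while $\|d\|_\infty>\epsilon_d$: $(\alpha,\epsilon_\alpha)\leftarrow$ Line-Search$(\theta,d,\epsilon_\alpha)$, $\theta\leftarrow\theta+d\alpha$, recompute $d$; then $\mu\leftarrow\gamma\mu$. Return $\theta$. *)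

From HB Require Import structures.
From mathcomp Require Import all_boot all_order all_algebra.
From mathcomp Require Import all_classical all_reals all_analysis.
From Stdlib Require Import Relations.
Set Implicit Arguments. Unset Strict Implicit. Unset Printing Implicit Defensive.
Import Order.TTheory GRing.Theory Num.Theory.
Local Open Scope classical_set_scope.
Local Open Scope ring_scope.

Section SIP.
Variable R : realType.

Definition edist (a b : 'rV[R]_3) : R :=
  Num.sqrt (\sum_(i < 3) (a ord0 i - b ord0 i) ^+ 2).

(* Shortest Euclidean distance between two sets (infimum, +oo if a set is empty). *)
Definition set_dist (A B : set 'rV[R]_3) : \bar R :=
  ereal_inf [set (edist x.1 x.2)%:E | x in A `*` B].

Variables (n nb no : nat) (nj : 'I_nb -> nat).

(* index of a body piece b_ij : a pair (i, j) with j < nj i *)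
Definition pidx := {i : 'I_nb & 'I_(nj i)}.

Definition feasible (body : 'I_nb -> R -> 'rV[R]_n -> set 'rV[R]_3)
  (obst : set 'rV[R]_3) (d0 T : R) (th : 'rV[R]_n) : Prop :=
  forall (i : 'I_nb) (t : R), 0 <= t <= T -> (d0%:E <= set_dist (body i t th) obst)%E.

(* s is a finite partition of [x, y] into consecutive closed intervals *)
Fixpoint chain (x y : R) (s : seq (R * R)) : Prop :=
  match s with
  | [::] => x = y
  | iv :: s' => iv.1 = x /\ iv.1 <= iv.2 /\ chain iv.2 y s'
  end.
Definition is_partition (T : R) (s : seq (R * R)) : Prop := chain 0 T s.

(* partitions of [0,T], one for each triple (i,j,k) *)
Definition Part := pidx -> 'I_no -> seq (R * R).

Definition midp (I : R * R) : R := (I.1 + I.2) / 2.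

Definition psi (L1 L2 eta x : R) : R := L1 * x / 2 + L2 * x `^ eta.

Variables (pieces : pidx -> R -> 'rV[R]_n -> set 'rV[R]_3)
          (obs : 'I_no -> set 'rV[R]_3) (d0 L1 L2 eta : R).

(* the tuple (i,j,k,l) fails the safety test of Algorithm 2 at theta *)
Definition unsafe (p : Part) (th : 'rV[R]_n) (s : pidx) (k : 'I_no) (l : nat) : Prop :=
  (l < size (p s k))%N /\
  let I := nth (0, 0) (p s k) l in
  (set_dist (pieces s (midp I) th) (obs k) <= (d0 + psi L1 L2 eta (I.2 - I.1))%:E)%E.

(* theta passes the safety check (Algorithm 2 returns None) *)
Definition passes_safety (p : Part) (th : 'rV[R]_n) : Prop :=
  forall s k l, ~ unsafe p th s k l.

Definition subdivide (p : Part) (s : pidx) (k : 'I_no) (l : nat) : Part :=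
  fun s' k' =>
    if (s' == s) && (k' == k) then
      let J := p s k in
      let I := nth (0, 0) J l in
      take l J ++ [:: (I.1, midp I); (midp I, I.2)] ++ drop l.+1 J
    else p s' k'.

Record ls_state := LS { ls_alpha : R; ls_eps : R; ls_part : Part; ls_dir : 'rV[R]_n }.

Variables (gamma : R)
  (* recomputation of the direction d (d^(1) or d^(2)) for given partitions *)
  (dir : Part -> 'rV[R]_n)
  (* wolfe p d a : theta + d a satisfies the Wolfe condition for the E built on p *)
  (wolfe : Part -> 'rV[R]_n -> R -> Prop)
  (th : 'rV[R]_n).

(* one iteration of the while loop of Line-Search (Algorithm 3) *)
Definition ls_step (st st' : ls_state) : Prop :=
  let: LS a e p d := st in
  let th' := th + a *: d in
  (exists s k l, unsafe p th' s k l /\ a <= e /\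
     st' = LS a (gamma * e) (subdivide p s k l) (dir (subdivide p s k l)))
  \/ ((exists s k l, unsafe p th' s k l) /\ e < a /\ st' = LS (gamma * a) e p d)
  \/ (passes_safety p th' /\ ~ wolfe p d a /\ st' = LS (gamma * a) e p d).

Definition ls_returns (st0 st : ls_state) : Prop :=
  clos_refl_trans ls_state ls_step st0 st /\
  passes_safety (ls_part st) (th + ls_alpha st *: ls_dir st) /\
  wolfe (ls_part st) (ls_dir st) (ls_alpha st).

End SIP.

(* Since Line-Search only ever bisects intervals, every partition it maintains
   still covers [0, T].  If theta passes the safety check, then on each interval
   I of each partition the distance at the midpoint exceeds
   d0 + L1 |I| / 2 + L2 |I|^eta >= d0 + L1 |I| / 2, while the Lipschitz bound
   moves it by at most L1 |I| / 2 inside I; hence every piece stays at distance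
   at least d0 from every obstacle at all times, and the distance between two
   unions is bounded below by the distances between their members. *)

From HB Require Import structures.
From mathcomp Require Import all_boot all_order all_algebra.
From mathcomp Require Import all_classical all_reals all_analysis.
From mathcomp Require Import lra.
From Stdlib Require Import Relations.
Set Implicit Arguments. Unset Strict Implicit. Unset Printing Implicit Defensive.
Import Order.TTheory GRing.Theory Num.Theory.
Local Open Scope classical_set_scope.
Local Open Scope ring_scope.

Section Chains.
Variable R : realType.
Implicit Types (x y t : R) (J : seq (R * R)).

Definition bisect (I : R * R) : seq (R * R) := [:: (I.1, midp I); (midp I, I.2)].

Lemma chain_le x y J : chain x y J -> x <= y.
Proof.
elim: J x => [|I J IH] x /=; first by move->.
by move=> [<- [le_I /IH]]; apply: le_trans.
Qed.

Lemma chain_bisect x y J l : chain x y J -> (l < size J)%N ->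
  chain x y (take l J ++ bisect (nth (0, 0) J l) ++ drop l.+1 J).
Proof.
elim: J x l => [|I J IH] x [|l] //= [<- [le_I chJ]] lt_l.
- rewrite drop0 /midp; do !split => //; lra.
- by do !split => //; apply: IH.
Qed.

Lemma chain_cover x y J t : chain x y J -> x < y -> x <= t <= y ->
  exists2 l, (l < size J)%N &
    let I := nth (0, 0) J l in [/\ x <= I.1, I.1 <= t, t <= I.2 & I.2 <= y].
Proof.
elim: J x => [|I J IH] x /=; first by move=> ->; rewrite ltxx.
move=> [<- [le_I chJ]] lt_xy /andP[le_xt le_ty].
have [le_tI | lt_It] := leP t I.2.
  by exists 0%N => //=; split => //; apply: chain_le chJ.
have lt_Iy : I.2 < y := lt_le_trans lt_It le_ty.
have [|l lt_l [le_I1 le_t le_t2 le_y]] := IH I.2 chJ lt_Iy; first by rewrite (ltW lt_It).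
by exists l.+1 => //=; split => //; apply: le_trans le_I1.
Qed.

End Chains.

Section LineSearchPartitions.
Variables (R : realType) (n nb no : nat) (nj : 'I_nb -> nat).
Variables (pieces : pidx nj -> R -> 'rV[R]_n -> set 'rV[R]_3)
  (obs : 'I_no -> set 'rV[R]_3) (d0 L1 L2 eta gamma T : R)
  (dir : Part R no nj -> 'rV[R]_n) (wolfe : Part R no nj -> 'rV[R]_n -> R -> Prop)
  (th : 'rV[R]_n).

Definition partitions_of (p : Part R no nj) : Prop :=
  forall s k, is_partition T (p s k).

Lemma subdivide_partitions p s k l : partitions_of p -> (l < size (p s k))%N ->
  partitions_of (subdivide p s k l).
Proof.
move=> p_part lt_l s' k'; rewrite /subdivide.
case: ifP => _; last exact: p_part.
exact: (chain_bisect (p_part s k) lt_l).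
Qed.

Let step := ls_step pieces obs d0 L1 L2 eta gamma dir wolfe th.

Lemma ls_step_partitions st st' : step st st' ->
  partitions_of (ls_part st) -> partitions_of (ls_part st').
Proof.
case: st => a e p d /= [[s [k [l [[lt_l _] [_ ->]]]]] | [[_ [_ ->]] | [_ [_ ->]]]] //.
by move/subdivide_partitions; apply.
Qed.

Lemma ls_reach_partitions st st' : clos_refl_trans _ step st st' ->
  partitions_of (ls_part st) -> partitions_of (ls_part st').
Proof.
elim=> [x y /ls_step_partitions | // | x y z _ IHxy _ IHyz] //.
by move=> /IHxy/IHyz.
Qed.

End LineSearchPartitions.

Section SafetyCheck.
Variable R : realType.
Implicit Types (f : R -> R) (eta c t : R).

Lemma lipschitz_const_ge0 f (L1 a b : R) : a < b ->
  `|f a - f b| <= L1 * `|a - b| -> 0 <= L1.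
Proof.
move=> lt_ab; have pos_ab : 0 < `|a - b| by rewrite normr_gt0 subr_eq0 lt_eqF.
by move/(le_trans (normr_ge0 _)); rewrite pmulr_lge0.
Qed.

Lemma midpoint_margin_ge f (L1 L2 : R) eta c (I : R * R) t :
  0 <= L1 -> 0 <= L2 -> I.1 <= t <= I.2 ->
  `|f (midp I) - f t| <= L1 * `|midp I - t| ->
  c + psi L1 L2 eta (I.2 - I.1) < f (midp I) -> c <= f t.
Proof.
move=> L1_ge0 L2_ge0 /andP[le_1t le_t2] lip; rewrite /psi => margin.
have dist_mid : `|midp I - t| <= (I.2 - I.1) / 2.
  by rewrite /midp ler_norml; apply/andP; split; lra.
have lip_mid : L1 * `|midp I - t| <= L1 * ((I.2 - I.1) / 2) by exact: ler_wpM2l.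
have pow_ge0 : 0 <= L2 * (I.2 - I.1) `^ eta by rewrite mulr_ge0 ?powR_ge0.
move: lip; rewrite ler_norml => /andP[_ lip]; lra.
Qed.

Lemma safe_partition_ge f (L1 L2 : R) eta c (T : R) (J : seq (R * R)) :
  0 < T -> 0 <= L2 ->
  (forall t1 t2, 0 <= t1 <= T -> 0 <= t2 <= T -> `|f t1 - f t2| <= L1 * `|t1 - t2|) ->
  is_partition T J ->
  (forall l, (l < size J)%N -> let I := nth (0, 0) J l in
     c + psi L1 L2 eta (I.2 - I.1) < f (midp I)) ->
  forall t, 0 <= t <= T -> c <= f t.
Proof.
move=> T_gt0 L2_ge0 lip J_part safe t t_in.
have L1_ge0 : 0 <= L1.
  by apply: (lipschitz_const_ge0 (f := f) T_gt0); apply: lip; rewrite lexx ltW.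
have [l lt_l [le_0 le_1t le_t2 le_T]] := chain_cover J_part T_gt0 t_in.
apply: (midpoint_margin_ge L1_ge0 L2_ge0 _ _ (safe l lt_l)).
  by rewrite le_1t le_t2.
by apply: lip => //; rewrite /midp; apply/andP; split; lra.
Qed.

End SafetyCheck.

Lemma le_set_dist_bigcup (R : realType) (I J : Type) (P : set I) (Q : set J)
    (A : I -> set 'rV[R]_3) (B : J -> set 'rV[R]_3) (c : \bar R) :
  (forall i j, P i -> Q j -> (c <= set_dist (A i) (B j))%E) ->
  (c <= set_dist (\bigcup_(i in P) A i) (\bigcup_(j in Q) B j))%E.
Proof.
move=> AB; apply/ereal_infP => _ [[x y] [[i Pi Aix] [j Qj Bjy]] <-].
apply: le_trans (AB i j Pi Qj) _; apply: ereal_inf_lbound.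
by exists (x, y).
Qed.

Theorem theorem1 (R : realType) (n nb no : nat) (nj : 'I_nb -> nat)
  (T d0 L1 L2 eta alpha0 gamma eps0 : R)
  (body : 'I_nb -> R -> 'rV[R]_n -> set 'rV[R]_3)
  (pieces : pidx nj -> R -> 'rV[R]_n -> set 'rV[R]_3)
  (obst : set 'rV[R]_3) (obs : 'I_no -> set 'rV[R]_3)
  (D : pidx nj -> 'I_no -> R -> 'rV[R]_n -> R)
  (dir : Part R no nj -> 'rV[R]_n) (wolfe : Part R no nj -> 'rV[R]_n -> R -> Prop)
  (th d : 'rV[R]_n) (p0 : Part R no nj) (st : ls_state R n no nj) :
  0 < T -> 0 <= d0 -> 0 < L2 -> 0 < eta -> 0 < alpha0 -> 0 < gamma < 1 -> 0 < eps0 ->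
  (* Assumption 1: finite decompositions with real-valued piecewise distances *)
  (forall (i : 'I_nb) t x, body i t x = \bigcup_(j in [set: 'I_(nj i)]) pieces (existT _ i j) t x) ->
  obst = \bigcup_(k in [set: 'I_no]) obs k ->
  (forall s k t x, set_dist (pieces s t x) (obs k) = (D s k t x)%:E) ->
  (* the Lipschitz constant L1 in t *)
  (forall s k x t1 t2, 0 <= t1 <= T -> 0 <= t2 <= T ->
     `|D s k t1 x - D s k t2 x| <= L1 * `|t1 - t2|) ->
  (* the partitions maintained by Algorithm 1 are partitions of [0,T] *)
  (forall s k, is_partition T (p0 s k)) ->
  (* Line-Search(theta, d, eps0) returns a positive alpha (final state st) *)
  ls_returns pieces obs d0 L1 L2 eta gamma dir wolfe th (LS alpha0 eps0 p0 d) st ->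
  0 < ls_alpha st ->
  feasible body obst d0 T (th + ls_alpha st *: ls_dir st).
Proof.
move=> T_gt0 _ L2_gt0 _ _ _ _ body_pieces obst_obs distE lip p0_part.
move=> [reach [safe _]] _ i t t_in.
have part := ls_reach_partitions reach p0_part.
rewrite body_pieces obst_obs; apply: le_set_dist_bigcup => j k _ _.
rewrite distE lee_fin.
apply: (safe_partition_ge (eta := eta) T_gt0 (ltW L2_gt0) (lip _ k _) (part (existT _ i j) k)) => // l lt_l /=.
rewrite ltNge; apply/negP => unsafe_l; apply: (safe (existT _ i j) k l).
by split => //=; rewrite distE lee_fin.
Qed.
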